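(* Let $T\subseteq\mathbb{N}$ be a $\neg\neg$-stable subset and $f:T\to\mathcal{L}(\mathbb{N})$ a map. Then there is a map $\bar f:\mathbb{N}\to\mathcal{L}(\mathbb{N})$ extending $f$, i.e. $\bar f(m)=f(m)$ for all $m\in T$.
   Context: We work constructively, in higher-order intuitionistic logic with Dependent Choice, together with the Stable Subspace Axiom: for every $\neg\neg$-stable $X\subseteq\mathbb{N}$, the restriction map $\Sigma^{\mathbb{N}}\to\Sigma^X$, $V\mapsto V\cap X$, is surjective. The axioms Markov principle and Enumerability ($\mathbb{N}\to\Sigma^{\mathbb{N}}$ surjective) are also assumed throughout. $\Sigma=\{p\in\Omega\mid\exists f\in2^{\mathbb{N}}(p\Leftrightarrow\exists n\,f(n)=1)\}$. A subset $T$ is $\neg\neg$-stable if $\neg\neg(m\in T)\Rightarrow m\in T$. The semidecidable lifting of a set $Y$ is $\mathcal{L}(Y)=\{S\subseteq Y\mid \forall y,y'\in S\,(y=y') \text{ and } (\exists y\in Y\,y\in S)\in\Sigma\}$, the set of partial values with semidecidable definedness. *)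

Definition Sig (p : Prop) : Prop :=
  exists f : nat -> bool, (p <-> exists n, f n = true).

(* A subset of N is a predicate; V : nat -> Prop is an element of Sigma^N
   when every membership proposition is in Sigma. *)
Definition SigSubset (V : nat -> Prop) : Prop := forall n, Sig (V n).

Definition nn_stable (T : nat -> Prop) : Prop :=
  forall m, ~ ~ T m -> T m.

(* The semidecidable lifting L(N): S subset N is a subsingleton with
   semidecidable inhabitedness. *)
Definition in_lift (S : nat -> Prop) : Prop :=
  (forall y y', S y -> S y' -> y = y') /\ Sig (exists y, S y).

(* Standing axioms, stated as predicates so they can be assumed as
   hypotheses of the theorem. *)

Definition DependentChoice : Prop :=
  forall (A : Type) (R : A -> A -> Prop),
    (forall x, exists y, R x y) ->
    forall x0 : A, exists g : nat -> A, g 0 = x0 /\ forall n, R (g n) (g (S n)).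

Definition MarkovPrinciple : Prop :=
  forall f : nat -> bool, ~ ~ (exists n, f n = true) -> exists n, f n = true.

(* Enumerability: N -> Sigma^N is surjective (equality in Sigma^N is
   extensional). *)
Definition Enumerability : Prop :=
  exists e : nat -> nat -> Prop,
    (forall k, SigSubset (e k)) /\
    forall V, SigSubset V -> exists k, forall n, e k n <-> V n.

Definition StableSubspaceAxiom : Prop :=
  forall X : nat -> Prop, nn_stable X ->
    forall W : {x : nat | X x} -> Prop,
      (forall x, Sig (W x)) ->
      exists V : nat -> Prop, SigSubset V /\
        forall x : {x : nat | X x}, V (proj1_sig x) <-> W x.

(** Transport the graph of [f] along a pairing [N x N ~ N]: it becomes a
    semidecidable subset of the not-not-stable set [{k | T (fst k)}], so the
    Stable Subspace Axiom extends it to a semidecidable relation [R] on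
    [N x N].  Any semidecidable relation can be uniformized by dovetailing
    the semideciders of [R m y] over all [y] (chosen by countable choice, a
    consequence of Dependent Choice) and keeping the [y] of the first
    success; this yields a partial function with semidecidable definedness.
    Over [T] the fibres of [R] are the subsingletons [f m], so the selected
    value is the value of [f]. *)

From Stdlib Require Import Arith Bool Cantor ConstructiveEpsilon.

Definition CountableChoice : Prop :=
  forall (A : Type) (P : nat -> A -> Prop),
    (forall n, exists a, P n a) -> exists g : nat -> A, forall n, P n (g n).

Lemma countable_choice_of_DC : DependentChoice -> CountableChoice.
Proof.
  intros DC A P HP.
  destruct (HP 0) as [a0 _].
  set (R := fun p q : nat * A => fst q = S (fst p) /\ P (fst p) (snd q)).
  assert (HR : forall p, exists q, R p q).
  { intros [n a]. destruct (HP n) as [b Hb]. exists (S n, b). split; auto. }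
  destruct (DC _ R HR (0, a0)) as [g [g0 gS]].
  assert (fst_g : forall n, fst (g n) = n).
  { induction n as [|n IH]; [now rewrite g0|].
    destruct (gS n) as [-> _]. now rewrite IH. }
  exists (fun n => snd (g (S n))). intros n.
  destruct (gS n) as [_ Hn]. now rewrite fst_g in Hn.
Qed.

Lemma Sig_in_lift_mem (CC : CountableChoice) (S : nat -> Prop) :
  in_lift S -> forall y, Sig (S y).
Proof.
  intros [S_uniq [d Hd]] y.
  assert (Hwit : forall n, exists z, d n = true -> S z).
  { intros n. destruct (d n) eqn:Edn.
    - destruct (proj2 Hd (ex_intro _ n Edn)) as [z Hz]. now exists z.
    - exists 0. discriminate. }
  destruct (CC _ _ Hwit) as [w Hw].
  exists (fun n => d n && Nat.eqb (w n) y). split.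
  - intros Sy. destruct (proj1 Hd (ex_intro _ y Sy)) as [n Hn].
    exists n. rewrite Hn; cbn. apply Nat.eqb_eq. exact (S_uniq _ _ (Hw n Hn) Sy).
  - intros [n Hn]. apply andb_prop in Hn as [Hdn Hwn].
    apply Nat.eqb_eq in Hwn as <-. exact (Hw n Hdn).
Qed.

Definition least_true (p : nat -> bool) (k : nat) : Prop :=
  p k = true /\ forall k', p k' = true -> k <= k'.

Lemma least_true_unique p k k' : least_true p k -> least_true p k' -> k = k'.
Proof.
  intros [Hk Hmin] [Hk' Hmin']. apply Nat.le_antisymm; auto.
Qed.

Lemma least_true_exists p : (exists k, p k = true) -> exists k, least_true p k.
Proof.
  intros Hex.
  destruct (epsilon_smallest (fun k => p k = true) (fun k => bool_dec (p k) true) Hex)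
    as [k Hk].
  now exists k.
Qed.

Definition search_value (p : nat -> bool) (d : nat -> nat) (y : nat) : Prop :=
  exists k, least_true p k /\ d k = y.

Lemma in_lift_search_value p d : in_lift (search_value p d).
Proof.
  split.
  - intros y y' [k [Hk <-]] [k' [Hk' <-]].
    now rewrite (least_true_unique _ _ _ Hk Hk').
  - exists p. split.
    + intros [y [k [[Hk _] _]]]. now exists k.
    + intros Hex. destruct (least_true_exists p Hex) as [k Hk].
      now exists (d k), k.
Qed.

Lemma Sig_relation_uniformize (CC : CountableChoice) (R : nat -> nat -> Prop) :
  (forall m y, Sig (R m y)) ->
  exists g : nat -> nat -> Prop, forall m,
    in_lift (g m) /\ (forall y, g m y -> R m y) /\
    ((exists y, R m y) -> exists y, g m y).
Proof.
  intros HR.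
  destruct (CC _ (fun k h => R (fst (of_nat k)) (snd (of_nat k)) <-> exists n, h n = true)
                (fun k => HR _ _)) as [h Hh].
  assert (Hsemi : forall m y, R m y <-> exists n, h (to_nat (m, y)) n = true).
  { intros m y. specialize (Hh (to_nat (m, y))). now rewrite cancel_of_to in Hh. }
  (* stage [k] of the search for [m] runs step [snd k] of the semidecider of [R m (fst k)] *)
  set (probe := fun m k => h (to_nat (m, fst (of_nat k))) (snd (of_nat k))).
  exists (fun m => search_value (probe m) (fun k => fst (of_nat k))).
  intros m. split; [|split].
  - apply in_lift_search_value.
  - intros y [k [[Hk _] <-]]. apply Hsemi. now exists (snd (of_nat k)).
  - intros [y Hy]. apply Hsemi in Hy as [n Hn].
    destruct (least_true_exists (probe m)) as [k Hk].
    + exists (to_nat (y, n)). unfold probe. now rewrite cancel_of_to.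
    + now exists (fst (of_nat k)), k.
Qed.

Section GraphExtension.

Variable T : nat -> Prop.
Variable G : {m : nat | T m} -> nat -> Prop.
Hypothesis G_resp : forall m (h h' : T m) y,
  G (exist _ m h) y <-> G (exist _ m h') y.

Lemma G_resp_eq m m' (h : T m) (h' : T m') y y' :
  m = m' -> y = y' -> G (exist _ m h) y <-> G (exist _ m' h') y'.
Proof. intros <- <-. apply G_resp. Qed.

Lemma Sig_relation_extend (SSA : StableSubspaceAxiom) :
  nn_stable T -> (forall x y, Sig (G x y)) ->
  exists R : nat -> nat -> Prop, (forall m y, Sig (R m y)) /\
    forall m (hm : T m) y, R m y <-> G (exist _ m hm) y.
Proof.
  intros hT HG.
  set (X := fun k => T (fst (of_nat k))).
  assert (hX : nn_stable X) by (intros k; apply hT).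
  set (W := fun x : {k | X k} =>
              G (exist _ (fst (of_nat (proj1_sig x))) (proj2_sig x))
                (snd (of_nat (proj1_sig x)))).
  destruct (SSA X hX W (fun x => HG _ _)) as [V [HVsig HV]].
  exists (fun m y => V (to_nat (m, y))). split.
  - intros m y. apply HVsig.
  - intros m hm y.
    assert (hx : X (to_nat (m, y))) by (unfold X; now rewrite cancel_of_to).
    rewrite (HV (exist _ _ hx)). unfold W; cbn [proj1_sig proj2_sig].
    apply G_resp_eq; now rewrite cancel_of_to.
Qed.

End GraphExtension.

Theorem proposition4p1
  (DC : DependentChoice) (MP : MarkovPrinciple) (EN : Enumerability)
  (SSA : StableSubspaceAxiom)
  (T : nat -> Prop) (hT : nn_stable T)
  (f : {m : nat | T m} -> nat -> Prop)
  (hf : forall x, in_lift (f x))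
  (hf_resp : forall m (h h' : T m) y,
      f (exist _ m h) y <-> f (exist _ m h') y) :
  exists fbar : nat -> nat -> Prop,
    (forall m, in_lift (fbar m)) /\
    forall x : {m : nat | T m}, forall y, fbar (proj1_sig x) y <-> f x y.
Proof.
  pose proof (countable_choice_of_DC DC) as CC.
  destruct (Sig_relation_extend T f hf_resp SSA hT
              (fun x => Sig_in_lift_mem CC _ (hf x))) as [R [HRsig HR]].
  destruct (Sig_relation_uniformize CC R HRsig) as [g Hg].
  exists g. split; [intros m; apply Hg|].
  intros [m hm] y; cbn [proj1_sig].
  destruct (Hg m) as [_ [g_sub g_def]].
  split.
  - intros Hgy. now apply HR, g_sub.
  - intros Hfy.
    destruct g_def as [y' Hgy'].
    { exists y. now apply (HR m hm). }
    assert (Hfy' : f (exist _ m hm) y') by now apply HR, g_sub.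
    now rewrite <- (proj1 (hf _) _ _ Hfy' Hfy).
Qed.
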